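(* Let $s,t\in\mathbb{R}$ with $s\ne0$, $s^2+4t>0$, and suppose $q=\varphi'_{s,t}/\varphi_{s,t}$ satisfies $0<\lvert q\rvert<1$. Let $a,b$ be real numbers, and let $f$ be a function defined on a set containing the points $aq^n,bq^n$ ($n\ge0$), with values in $\mathbb{R}$ or $\mathbb{C}$, such that $\mathbf{D}_{s,t}f\in\mathcal{L}^1_{s,t}[a,b]$. Then: (1) $\displaystyle\int_a^b(\mathbf{D}_{s,t}f)(x)\,d_{s,t}x=\Big[f(b)-\lim_{n\to\infty}f(bq^n)\Big]-\Big[f(a)-\lim_{n\to\infty}f(aq^n)\Big]$, provided these limits exist; (2) if in addition $f$ is continuous at $0$, then $\int_a^b(\mathbf{D}_{s,t}f)(x)\,d_{s,t}x=f(b)-f(a)$.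
   Context: $\varphi_{s,t}=\frac{s+\sqrt{s^2+4t}}{2}$, $\varphi'_{s,t}=\frac{s-\sqrt{s^2+4t}}{2}$. The $(s,t)$-derivative is $(\mathbf{D}_{s,t}f)(x)=\frac{f(\varphi_{s,t}x)-f(\varphi'_{s,t}x)}{(\varphi_{s,t}-\varphi'_{s,t})x}$ for $x\ne0$ and $(\mathbf{D}_{s,t}f)(0)=f'(0)$. For $0<\lvert q\rvert<1$, the $(s,t)$-integral is $\int_a^b g(x)\,d_{s,t}x=(1-q)\sum_{n=0}^\infty\big[bg(bq^n/\varphi_{s,t})-ag(aq^n/\varphi_{s,t})\big]q^n$. $\mathcal{L}^1_{s,t}[a,b]$ is the set of functions $g$ such that $\lvert g\rvert$ is $(s,t)$-integrable on $[a,b]$, i.e. $\int_a^b\lvert g\rvert\,d_{s,t}x<\infty$ (the defining series converges). *)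

(* Functions take complex values (covers the real case). *)
From Stdlib Require Import Reals.
From Coquelicot Require Import Coquelicot.
Open Scope R_scope.

Definition phi (s t : R) : R := (s + sqrt (s ^ 2 + 4 * t)) / 2.
Definition phi' (s t : R) : R := (s - sqrt (s ^ 2 + 4 * t)) / 2.

Definition qst (s t : R) : R := phi' s t / phi s t.

Definition deriv0 (f : R -> C) : C :=
  (Derive (fun x => Re (f x)) 0, Derive (fun x => Im (f x)) 0).

Definition Dst (s t : R) (f : R -> C) (x : R) : C :=
  if Req_EM_T x 0 then deriv0 f
  else Cdiv (Cminus (f (phi s t * x)) (f (phi' s t * x)))
            (RtoC ((phi s t - phi' s t) * x)).

Definition st_integral_term (s t : R) (g : R -> C) (a b : R) (n : nat) : C :=
  let q := qst s t in
  Cmult (RtoC ((1 - q) * q ^ n))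
        (Cminus (Cmult (RtoC b) (g (b * q ^ n / phi s t)))
                (Cmult (RtoC a) (g (a * q ^ n / phi s t)))).

Definition is_st_integral (s t : R) (g : R -> C) (a b : R) (v : C) : Prop :=
  is_series (st_integral_term s t g a b) v.

Definition L1st (s t : R) (a b : R) (g : R -> C) : Prop :=
  ex_series (fun n : nat =>
    let q := qst s t in
    (1 - q) * q ^ n * (b * Cmod (g (b * q ^ n / phi s t))
                       - a * Cmod (g (a * q ^ n / phi s t)))).

(* Since phi' = q phi, the (s,t)-derivative at x q^n / phi is the difference
   quotient of f between x q^n and x q^(n+1), and the weight (1 - q) q^n x of the
   (s,t)-integral is exactly the gap between these points.  Hence the n-th term
   of the integral of D_{s,t} f is
   (f (b q^n) - f (b q^(n+1))) - (f (a q^n) - f (a q^(n+1))),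
   the series telescopes, and its sum is read off from the limits of
   f (a q^n) and f (b q^n); continuity at 0 identifies both limits with f 0. *)
From Stdlib Require Import Reals Lra.
From Coquelicot Require Import Coquelicot.
Open Scope R_scope.

Lemma sum_n_telescope {G : AbelianGroup} (u : nat -> G) (n : nat) :
  sum_n (fun k => minus (u k) (u (S k))) n = minus (u O) (u (S n)).
Proof.
  induction n as [|n IH].
  - now rewrite sum_O.
  - rewrite sum_Sn, IH. unfold minus.
    now rewrite <- plus_assoc, (plus_assoc (opp _)), plus_opp_l, plus_zero_l.
Qed.

Lemma is_series_telescope {K : AbsRing} {V : NormedModule K} (u : nat -> V) (l : V) :
  filterlim u eventually (locally l) ->
  is_series (fun k => minus (u k) (u (S k))) (minus (u O) l).
Proof.
  intros Hu. unfold is_series.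
  apply (filterlim_ext (fun n => minus (u O) (u (S n)))).
  { intros n. symmetry. exact (sum_n_telescope u n). }
  assert (Hshift : filterlim (fun n => u (S n)) eventually (locally l)).
  { apply (filterlim_comp nat nat V S u eventually eventually); [|exact Hu].
    apply eventually_subseq. auto. }
  unfold minus.
  eapply filterlim_comp_2; [apply filterlim_const | | apply (@filterlim_plus K V)].
  eapply filterlim_comp; [exact Hshift | apply (@filterlim_opp K V)].
Qed.

Lemma filterlim_continuous_geom {U : UniformSpace} (f : R -> U) (q c : R) :
  Rabs q < 1 -> continuous f 0 ->
  filterlim (fun n => f (c * q ^ n)) eventually (locally (f 0)).
Proof.
  intros Hq Hf.
  apply (filterlim_comp nat R U (fun n => c * q ^ n) f eventually (locally 0)); [|exact Hf].
  assert (Hlim := is_lim_seq_scal_l _ c _ (is_lim_seq_geom q Hq)).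
  simpl in Hlim. now rewrite Rmult_0_r in Hlim.
Qed.

Section Telescoping.

Variables (s t : R) (f : R -> C).
Hypothesis disc_pos : s ^ 2 + 4 * t > 0.
Hypothesis qst_neq0 : qst s t <> 0.

Lemma phi_sub_phi'_gt0 : 0 < phi s t - phi' s t.
Proof.
  unfold phi, phi'.
  assert (0 < sqrt (s ^ 2 + 4 * t)) by (apply sqrt_lt_R0; lra).
  lra.
Qed.

(* [qst] divides by [phi], so [phi = 0] would force the junk value [q = 0]. *)
Lemma phi_neq0 : phi s t <> 0.
Proof.
  intros E. apply qst_neq0. unfold qst. rewrite E. unfold Rdiv. rewrite Rinv_0. ring.
Qed.

Lemma phi'_eq_qst_mul_phi : phi' s t = qst s t * phi s t.
Proof. unfold qst. field. exact phi_neq0. Qed.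

Lemma one_sub_qst_neq0 : 1 - qst s t <> 0.
Proof.
  assert (E : 1 - qst s t = (phi s t - phi' s t) / phi s t).
  { rewrite phi'_eq_qst_mul_phi. field. exact phi_neq0. }
  rewrite E. unfold Rdiv. apply Rmult_integral_contrapositive_currified.
  - apply Rgt_not_eq, phi_sub_phi'_gt0.
  - apply Rinv_neq_0_compat, phi_neq0.
Qed.

(* At [x = 0] the weight vanishes, so the junk value [f'(0)] of [Dst] never matters. *)
Lemma Dst_weighted (x : R) :
  Cmult (RtoC ((1 - qst s t) * x)) (Dst s t f (x / phi s t))
  = Cminus (f x) (f (qst s t * x)).
Proof.
  destruct (Req_dec x 0) as [->|Hx].
  { rewrite !Rmult_0_r. ring. }
  assert (Hp := phi_neq0).
  assert (Hw : (1 - qst s t) * x <> 0)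
    by (apply Rmult_integral_contrapositive_currified; [exact one_sub_qst_neq0 | exact Hx]).
  unfold Dst. destruct (Req_EM_T (x / phi s t) 0) as [E|_].
  { exfalso. apply Hx. apply (Rmult_eq_reg_r (/ phi s t)); [|now apply Rinv_neq_0_compat].
    rewrite Rmult_0_l. exact E. }
  replace (phi s t * (x / phi s t)) with x by (field; exact Hp).
  replace (phi' s t * (x / phi s t)) with (qst s t * x)
    by (rewrite phi'_eq_qst_mul_phi; field; exact Hp).
  replace ((phi s t - phi' s t) * (x / phi s t)) with ((1 - qst s t) * x)
    by (rewrite phi'_eq_qst_mul_phi; field; exact Hp).
  field. intros E. apply Hw. now apply RtoC_inj.
Qed.

Lemma st_integral_term_Dst (a b : R) (n : nat) :
  st_integral_term s t (Dst s t f) a b n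
  = Cminus (Cminus (f (b * qst s t ^ n)) (f (b * qst s t ^ S n)))
           (Cminus (f (a * qst s t ^ n)) (f (a * qst s t ^ S n))).
Proof.
  assert (Hstep : forall c, Cminus (f (c * qst s t ^ n)) (f (c * qst s t ^ S n))
      = Cmult (RtoC ((1 - qst s t) * qst s t ^ n))
              (Cmult (RtoC c) (Dst s t f (c * qst s t ^ n / phi s t)))).
  { intros c. replace (c * qst s t ^ S n) with (qst s t * (c * qst s t ^ n)) by (simpl; ring).
    rewrite <- Dst_weighted, !RtoC_mult. ring. }
  unfold st_integral_term. rewrite !Hstep. ring.
Qed.

Lemma is_st_integral_Dst (a b : R) (La Lb : C) :
  filterlim (fun n => f (a * qst s t ^ n)) eventually (locally La) ->
  filterlim (fun n => f (b * qst s t ^ n)) eventually (locally Lb) ->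
  is_st_integral s t (Dst s t f) a b (Cminus (Cminus (f b) Lb) (Cminus (f a) La)).
Proof.
  intros Ha Hb. unfold is_st_integral.
  apply (is_series_ext _ _ _ (fun n => eq_sym (st_integral_term_Dst a b n))).
  assert (Hpow0 : forall c, c = c * qst s t ^ 0) by (intros c; simpl; ring).
  rewrite (Hpow0 a), (Hpow0 b) at 1.
  apply (@is_series_minus _ C_NormedModule);
    apply (@is_series_telescope _ C_NormedModule (fun n => f (_ * qst s t ^ n))); assumption.
Qed.

End Telescoping.

Theorem mainTheorem6 (s t : R) (a b : R) (f : R -> C) :
  s <> 0 ->
  s ^ 2 + 4 * t > 0 ->
  0 < Rabs (qst s t) < 1 ->
  L1st s t a b (Dst s t f) ->
  (forall La Lb : C,
     filterlim (fun n : nat => f (a * qst s t ^ n)) eventually (locally La) ->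
     filterlim (fun n : nat => f (b * qst s t ^ n)) eventually (locally Lb) ->
     is_st_integral s t (Dst s t f) a b
       (Cminus (Cminus (f b) Lb) (Cminus (f a) La)))
  /\
  (continuous f 0 ->
     is_st_integral s t (Dst s t f) a b (Cminus (f b) (f a))).
Proof.
  intros _ Hdisc [Hq0 Hq1] _.
  assert (Hq : qst s t <> 0) by (intros E; rewrite E, Rabs_R0 in Hq0; lra).
  split.
  - intros La Lb. exact (is_st_integral_Dst s t f Hdisc Hq a b La Lb).
  - intros Hc.
    replace (Cminus (f b) (f a)) with (Cminus (Cminus (f b) (f 0)) (Cminus (f a) (f 0)))
      by ring.
    apply is_st_integral_Dst; try assumption; apply filterlim_continuous_geom; assumption.
Qed.
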